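(* Let $\tau$ be a counterclockwise permutation for monotone non-identical linear functions $f_1,\dots,f_n$. Then the cyclic sequence $(f^{\tau_0},\dots,f^{\tau_{n-1}})$ is strictly unimodal. Moreover, if $f_1,\dots,f_n$ are neither colinear nor potentially identical, then for every $k\in\{0,\dots,n-1\}$ (indices mod $n$, with $\tau_n=\tau_0$), $f^{\tau_k}=f^{\tau_{k+1}}$ implies exactly one of: (i) $f^{\tau_k}=f^{\tau_{k+1}}=\min_{0\le i<n}f^{\tau_i}$ and $\theta(f_{\tau(k+1)})+\pi=_{2\pi}\theta(f^{\tau_k})$; (ii) $f^{\tau_k}=f^{\tau_{k+1}}=\max_{0\le i<n}f^{\tau_i}$ and $\theta(f_{\tau(k+1)})=_{2\pi}\theta(f^{\tau_k})$.
   Context: A linear function is $f(x)=ax+b$; monotone means $a>0$; identical means $f(x)=x$. $\vec f=(b,1-a)^\top$ and $\theta(f)\in[0,2\pi)$ is its polar angle ($\bot$ if $\vec f=0$); $\theta_1=_{2\pi}\theta_2$ means $\theta_1-\theta_2\in2\pi\mathbb{Z}$. For a permutation $\sigma$ of $[n]$, $f^\sigma=f_{\sigma(n)}\circ\cdots\circ f_{\sigma(1)}$; these composites are totally ordered pointwise. $\sigma$ is counterclockwise if, after discarding positions with identical $f_{\sigma(i)}$, there is $k$ with $\theta(f_{\sigma(k)})\le\cdots\le\theta(f_{\sigma(n)})\le\theta(f_{\sigma(1)})\le\cdots\le\theta(f_{\sigma(k-1)})$. $f_1,\dots,f_n$ are colinear if some $\lambda$ satisfies $\theta(f_i)\in\{\lambda,\lambda+\pi\}+2\pi\mathbb{Z}$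 or $\theta(f_i)=\bot$ for all $i$, and potentially identical if $f^\sigma(x)=x$ for some counterclockwise $\sigma$. The $k$-shift is $\tau_k(i)=\tau(i+k)$ for $i\le n-k$, $\tau_k(i)=\tau(i+k-n)$ otherwise. A cyclic sequence $(x_0,\dots,x_{n-1})$ is unimodal if there are $k,\ell$ with $x_k\le x_{k+1}\le\cdots\le x_\ell\ge x_{\ell+1}\ge\cdots\ge x_{k-1}\ge x_k$ (indices mod $n$); it is strictly unimodal if it is unimodal and whenever $x_j=x_{j+1}$ this common value is the minimum or the maximum of the sequence. *)

From Stdlib Require Import Reals Lra Lia ZArith Arith ClassicalEpsilon.
Open Scope R_scope.

(* A linear function f(x) = a x + b is represented by the pair (a, b). *)
Definition lin := (R * R)%type.
Definition lin_eval (f : lin) (x : R) : R := fst f * x + snd f.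
Definition monotone (f : lin) : Prop := 0 < fst f.
Definition identical (f : lin) : Prop := forall x, lin_eval f x = x.

Definition lin_comp (g f : lin) : lin := (fst g * fst f, fst g * snd f + snd g).

Definition lin_le (f g : lin) : Prop := forall x, lin_eval f x <= lin_eval g x.

Definition vec (f : lin) : R * R := (snd f, 1 - fst f).

Definition polar_angle (v : R * R) (t : R) : Prop :=
  0 <= t < 2 * PI /\
  exists r, 0 < r /\ fst v = r * cos t /\ snd v = r * sin t.

Definition angle_of (v : R * R) : R :=
  epsilon (inhabits 0) (polar_angle v).

(* theta f : None stands for "bottom" (vec f = 0) *)
Definition theta (f : lin) : option R :=
  let v := vec f in
  match Req_EM_T (fst v) 0, Req_EM_T (snd v) 0 with
  | left _, left _ => None
  | _, _ => Some (angle_of v)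
  end.

Definition eq2pi (a b : R) : Prop := exists z : Z, a - b = 2 * PI * IZR z.

Definition eq2pi_opt (a b : option R) : Prop :=
  match a, b with
  | Some a', Some b' => eq2pi a' b'
  | _, _ => False
  end.

Definition add_pi (a : option R) : option R :=
  match a with Some t => Some (t + PI) | None => None end.

Definition is_perm (n : nat) (s : nat -> nat) : Prop :=
  (forall i, (1 <= i <= n)%nat -> (1 <= s i <= n)%nat) /\
  (forall i j, (1 <= i <= n)%nat -> (1 <= j <= n)%nat -> s i = s j -> i = j).

Fixpoint comp_prefix (f : nat -> lin) (s : nat -> nat) (m : nat) : lin :=
  match m with
  | O => (1, 0)
  | S m' => lin_comp (f (s (S m'))) (comp_prefix f s m')
  end.

Definition composite (n : nat) (f : nat -> lin) (s : nat -> nat) : lin :=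
  comp_prefix f s n.

Definition shift (n : nat) (tau : nat -> nat) (k : nat) : nat -> nat :=
  fun i => if (i <=? n - k)%nat then tau (i + k)%nat else tau (i + k - n)%nat.

(* sigma is counterclockwise: after discarding the positions with identical
   f_{sigma(i)}, the angles, read cyclically from some position k, are
   nondecreasing.  rot k i is the i-th position (1-based) when starting at k. *)
Definition rot (n k i : nat) : nat := ((k + i - 2) mod n + 1)%nat.

Definition counterclockwise (n : nat) (f : nat -> lin) (s : nat -> nat) : Prop :=
  exists k, (1 <= k <= n)%nat /\
    forall i j, (1 <= i)%nat -> (i <= j)%nat -> (j <= n)%nat ->
      ~ identical (f (s (rot n k i))) -> ~ identical (f (s (rot n k j))) ->
      forall ti tj, theta (f (s (rot n k i))) = Some ti ->
                    theta (f (s (rot n k j))) = Some tj -> ti <= tj.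

Definition colinear (n : nat) (f : nat -> lin) : Prop :=
  exists lam, forall i, (1 <= i <= n)%nat ->
    theta (f i) = None \/
    exists t, theta (f i) = Some t /\ (eq2pi t lam \/ eq2pi t (lam + PI)).

Definition potentially_identical (n : nat) (f : nat -> lin) : Prop :=
  exists s, is_perm n s /\ counterclockwise n f s /\
    forall x, lin_eval (composite n f s) x = x.

(* cyclic sequences (x_0, ..., x_{n-1}) given as x : nat -> T read mod n *)
Definition unimodal {T : Type} (le : T -> T -> Prop) (n : nat) (x : nat -> T) : Prop :=
  exists k l, (k < n)%nat /\ (l < n)%nat /\
    let d := ((l + n - k) mod n)%nat in
    (forall i, (i < d)%nat -> le (x ((k + i) mod n)%nat) (x ((k + i + 1) mod n)%nat)) /\
    (forall i, (d <= i < n)%nat -> le (x ((k + i + 1) mod n)%nat) (x ((k + i) mod n)%nat)).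

Definition is_min {T : Type} (le : T -> T -> Prop) (n : nat) (x : nat -> T) (v : T) :=
  forall i, (i < n)%nat -> le v (x i).
Definition is_max {T : Type} (le : T -> T -> Prop) (n : nat) (x : nat -> T) (v : T) :=
  forall i, (i < n)%nat -> le (x i) v.

Definition strictly_unimodal {T : Type} (le : T -> T -> Prop) (n : nat) (x : nat -> T) : Prop :=
  unimodal le n x /\
  forall j, (j < n)%nat -> x j = x ((j + 1) mod n)%nat ->
    is_min le n x (x j) \/ is_max le n x (x j).

Definition shift_seq (n : nat) (f : nat -> lin) (tau : nat -> nat) (k : nat) : lin :=
  composite n f (shift n tau (k mod n)).

From Pilot Require Import Defs.
From Stdlib Require Import Reals Lra Lia ZArith Arith Classical ClassicalEpsilon.
Open Scope R_scope.

(* All cyclic shifts f^{tau_k} have the same slope a, so they are ordered by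
   their offsets b_k.  With the letter g_k = f_{tau(k+1)} one has
   f^{tau_{k+1}} o g_k = g_k o f^{tau_k}, so b_{k+1} - b_k is a positive
   multiple of sin (theta f^{tau_k} - theta g_k), and has the sign of
   sin (theta f^{tau_{k+1}} - theta g_k) as well.  Lift the angles of the
   letters, in counterclockwise order, to a nondecreasing sequence gaining 2 PI
   per period, and count in half-turns the angle psi_k from the lifted letter to
   f^{tau_k}.  All vec f^{tau_k} = (b_k, 1 - a) lie in one half-plane, so this
   count never increases; it drops by 4 per period, and b steps up, stays,
   steps down, stays while the count is 1, 0, 3, 2 mod 4.  Hence the offsets
   are unimodal, and a flat step occurs only at the maximum (psi = 0 mod 2 PI)
   or at the minimum (psi = PI mod 2 PI). *)

(** * Polar angles *)

Lemma polar_angle_exists (v : R * R) :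
  ~ (fst v = 0 /\ snd v = 0) -> exists t, polar_angle v t.
Proof.
  destruct v as [u w]; simpl; intros Hnz.
  assert (Hpos : 0 < u * u + w * w).
  { destruct (Req_dec u 0); destruct (Req_dec w 0); try tauto; nra. }
  set (r := sqrt (u * u + w * w)).
  assert (Hr : 0 < r) by (apply sqrt_lt_R0; lra).
  assert (Hr2 : r * r = u * u + w * w) by (apply sqrt_sqrt; lra).
  assert (Hc : -1 <= u / r <= 1).
  { split; apply (Rmult_le_reg_r r); try lra; field_simplify; try lra; nra. }
  set (t0 := acos (u / r)).
  assert (Hb := acos_bound (u / r)). fold t0 in Hb.
  assert (Hsin : 0 <= sin t0) by (apply sin_ge_0; lra).
  assert (Hu : u = r * cos t0) by (unfold t0; rewrite cos_acos by auto; field; lra).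
  assert (Hw2 : Rsqr (r * sin t0) = Rsqr w).
  { pose proof (sin2_cos2 t0) as Hsc. unfold Rsqr in *.
    replace (r * sin t0 * (r * sin t0))
      with (r * r * (sin t0 * sin t0 + cos t0 * cos t0) - r * cos t0 * (r * cos t0)) by ring.
    rewrite Hsc, <- Hu. lra. }
  pose proof PI_RGT_0.
  destruct (Rle_dec 0 w) as [Hw|Hw].
  - exists t0. split; [lra|]. exists r. repeat split; auto.
    symmetry; apply Rsqr_inj; auto; nra.
  - assert (Hw' : r * sin t0 = - w) by (apply Rsqr_inj; [nra|lra|rewrite Hw2; unfold Rsqr; ring]).
    assert (Ht0 : 0 < t0).
    { destruct (Req_dec t0 0) as [E|E]; [|lra]. rewrite E, sin_0 in Hw'. lra. }
    exists (2 * PI - t0). split; [lra|]. exists r. split; [lra|]. simpl.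
    rewrite cos_minus, sin_minus, cos_2PI, sin_2PI. split; nra.
Qed.

Lemma vec_neq0 (f : lin) : ~ identical f -> ~ (fst (vec f) = 0 /\ snd (vec f) = 0).
Proof.
  destruct f as [a b]; unfold identical, vec, lin_eval; simpl.
  intros H [H1 H2]; apply H; intros x. subst. nra.
Qed.

Lemma angle_of_spec (v : R * R) :
  ~ (fst v = 0 /\ snd v = 0) -> polar_angle v (angle_of v).
Proof. intros H. unfold angle_of. apply epsilon_spec, polar_angle_exists, H. Qed.

Lemma theta_angle_of (f : lin) :
  ~ (fst (vec f) = 0 /\ snd (vec f) = 0) -> theta f = Some (angle_of (vec f)).
Proof.
  intros H. unfold theta.
  destruct (Req_EM_T (fst (vec f)) 0); destruct (Req_EM_T (snd (vec f)) 0); tauto.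
Qed.

Lemma polar_angle_upper v t : polar_angle v t -> 0 < snd v -> 0 < t < PI.
Proof.
  intros [Ht [r [Hr [_ Hy]]]] Hs. pose proof PI_RGT_0.
  assert (Hsin : 0 < sin t) by (rewrite Hy in Hs; nra).
  split.
  - destruct (Req_dec t 0) as [E|E]; [rewrite E, sin_0 in Hsin|]; lra.
  - destruct (Rlt_dec t PI) as [E|E]; auto.
    destruct (Req_dec t PI) as [E2|E2]; [rewrite E2, sin_PI in Hsin; lra|].
    assert (sin t < 0) by (apply sin_lt_0; lra). lra.
Qed.

Lemma polar_angle_lower v t : polar_angle v t -> snd v < 0 -> PI < t < 2 * PI.
Proof.
  intros [Ht [r [Hr [_ Hy]]]] Hs. pose proof PI_RGT_0.
  assert (Hsin : sin t < 0) by (rewrite Hy in Hs; nra).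
  split; [|lra].
  destruct (Rlt_dec PI t) as [E|E]; auto.
  assert (0 <= sin t) by (apply sin_ge_0; lra). lra.
Qed.

Lemma polar_angle_axis v t : polar_angle v t -> snd v = 0 ->
  (0 < fst v -> t = 0) /\ (fst v < 0 -> t = PI).
Proof.
  intros [Ht [r [Hr [Hx Hy]]]] Hs. pose proof PI_RGT_0.
  assert (Hsin : sin t = 0) by (rewrite Hy in Hs; nra).
  destruct (sin_eq_0_0 t Hsin) as [z Hz].
  assert (Hz1 : IZR z < 2) by (apply Rmult_lt_reg_r with PI; lra).
  assert (Hz2 : IZR (-1) < IZR z) by (apply Rmult_lt_reg_r with PI; simpl; lra).
  apply lt_IZR in Hz1, Hz2.
  assert (z = 0 \/ z = 1)%Z as [-> | ->] by lia; simpl in Hz; subst t.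
  - rewrite Rmult_0_l, cos_0 in Hx. split; intros; lra.
  - rewrite Rmult_1_l, cos_PI in Hx. split; intros; lra.
Qed.

Lemma cross_polar_angle u v s t : polar_angle u s -> polar_angle v t ->
  exists r, 0 < r /\ fst u * snd v - snd u * fst v = r * sin (t - s).
Proof.
  intros [_ [r [Hr [Hx Hy]]]] [_ [q [Hq [Hx' Hy']]]].
  exists (r * q). split; [nra|].
  rewrite Hx, Hy, Hx', Hy', sin_minus. ring.
Qed.

(** * Counting half-turns *)

Definition pi_floor (x : R) : Z := (up (x / PI) - 1)%Z.

Lemma pi_floor_spec x : IZR (pi_floor x) * PI <= x < (IZR (pi_floor x) + 1) * PI.
Proof.
  unfold pi_floor. pose proof PI_RGT_0. destruct (archimed (x / PI)) as [H1 H2].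
  rewrite minus_IZR. simpl.
  assert (E : x = (x / PI) * PI) by (field; lra).
  split.
  - rewrite E at 2. apply Rmult_le_compat_r; lra.
  - rewrite E at 1. apply Rmult_lt_compat_r; lra.
Qed.

Lemma IZR_le_of_lt_succ a b : IZR a < IZR b + 1 -> (a <= b)%Z.
Proof. intros H. rewrite <- plus_IZR in H. apply lt_IZR in H. lia. Qed.

Lemma pi_floor_unique x z : IZR z * PI <= x < (IZR z + 1) * PI -> pi_floor x = z.
Proof.
  intros [H1 H2]. destruct (pi_floor_spec x) as [H3 H4]. pose proof PI_RGT_0.
  assert (A : IZR z < IZR (pi_floor x) + 1) by (apply Rmult_lt_reg_r with PI; lra).
  assert (B : IZR (pi_floor x) < IZR z + 1) by (apply Rmult_lt_reg_r with PI; lra).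
  apply IZR_le_of_lt_succ in A, B. lia.
Qed.

Lemma pi_floor_le x y : x <= y -> (pi_floor x <= pi_floor y)%Z.
Proof.
  intros Hxy. pose proof PI_RGT_0.
  destruct (pi_floor_spec x), (pi_floor_spec y).
  apply IZR_le_of_lt_succ, Rmult_lt_reg_r with PI; lra.
Qed.

Lemma pi_floor_add x m : pi_floor (x + IZR m * PI) = (pi_floor x + m)%Z.
Proof.
  apply pi_floor_unique. destruct (pi_floor_spec x).
  rewrite plus_IZR. lra.
Qed.

(* 2z on the multiple z PI of PI, 2z+1 on the open interval (z PI, (z+1) PI). *)
Definition pi_level (x : R) : Z := (pi_floor x - pi_floor (- x))%Z.

Lemma pi_level_le x y : x <= y -> (pi_level x <= pi_level y)%Z.
Proof.
  intros H. unfold pi_level.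
  pose proof (pi_floor_le x y H). pose proof (pi_floor_le (- y) (- x) ltac:(lra)). lia.
Qed.

Lemma pi_level_sub_2PI x : pi_level (x - 2 * PI) = (pi_level x - 4)%Z.
Proof.
  unfold pi_level.
  replace (x - 2 * PI) with (x + IZR (-2) * PI) by (simpl; ring).
  replace (- (x + IZR (-2) * PI)) with (- x + IZR 2 * PI) by (simpl; ring).
  rewrite !pi_floor_add. lia.
Qed.

Lemma pi_level_cases x : exists z,
  (x = IZR z * PI /\ pi_level x = (2 * z)%Z) \/
  (IZR z * PI < x < (IZR z + 1) * PI /\ pi_level x = (2 * z + 1)%Z).
Proof.
  exists (pi_floor x). unfold pi_level. destruct (pi_floor_spec x) as [H1 H2].
  destruct (Req_dec x (IZR (pi_floor x) * PI)) as [E|E]; [left|right]; split; try lra.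
  - rewrite (pi_floor_unique (- x) (- pi_floor x)); [lia|].
    rewrite opp_IZR. pose proof PI_RGT_0. lra.
  - rewrite (pi_floor_unique (- x) (- pi_floor x - 1)); [lia|].
    rewrite minus_IZR, opp_IZR. lra.
Qed.

Lemma sin_add_2kPI x (m : Z) : sin (x + 2 * IZR m * PI) = sin x.
Proof.
  destruct (Z_le_gt_dec 0 m) as [H|H].
  - rewrite <- (Z2Nat.id m H), <- INR_IZR_INZ. apply sin_period.
  - rewrite <- (sin_period (x + 2 * IZR m * PI) (Z.to_nat (- m))).
    rewrite INR_IZR_INZ, Z2Nat.id, opp_IZR by lia. f_equal. ring.
Qed.

Lemma sin_sub_2nPI a (w : nat) : sin (a - 2 * INR w * PI) = sin a.
Proof.
  rewrite <- (sin_period (a - 2 * INR w * PI) w). f_equal. ring.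
Qed.

Lemma PI_neq_mult_2PI (z : Z) : PI <> 2 * PI * IZR z.
Proof.
  intros H. pose proof PI_RGT_0.
  assert (E : IZR 1 = IZR (2 * z)) by (rewrite mult_IZR; apply Rmult_eq_reg_r with PI; lra).
  apply eq_IZR in E. lia.
Qed.

Lemma pi_level_even x m : pi_level x = (2 * m)%Z -> x = IZR m * PI.
Proof.
  destruct (pi_level_cases x) as [z [[Ex Lx] | [_ Lx]]]; rewrite Lx; intros E; [|lia].
  replace m with z by lia. exact Ex.
Qed.

Lemma sin_pi_level_1mod4 x m : pi_level x = (4 * m + 1)%Z -> 0 < sin x.
Proof.
  destruct (pi_level_cases x) as [z [[_ Lx] | [Ex Lx]]]; rewrite Lx; intros E; [lia|].
  replace z with (2 * m)%Z in Ex by lia.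
  rewrite <- (sin_add_2kPI x (- m)). rewrite mult_IZR, opp_IZR in *.
  apply sin_gt_0; nra.
Qed.

Lemma sin_pi_level_3mod4 x m : pi_level x = (4 * m + 3)%Z -> sin x < 0.
Proof.
  destruct (pi_level_cases x) as [z [[_ Lx] | [Ex Lx]]]; rewrite Lx; intros E; [lia|].
  replace z with (2 * m + 1)%Z in Ex by lia.
  rewrite <- (sin_add_2kPI x (- m)). rewrite plus_IZR, mult_IZR, opp_IZR in *.
  apply sin_lt_0; nra.
Qed.

Lemma sin_pi_level_even x m : pi_level x = (2 * m)%Z -> sin x = 0.
Proof. intros H. rewrite (pi_level_even x m H). apply sin_eq_0_1. eauto. Qed.

Lemma pi_level_add_PI x : pi_level (x + PI) = (pi_level x + 2)%Z.
Proof.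
  unfold pi_level.
  replace (x + PI) with (x + IZR 1 * PI) by (simpl; ring).
  replace (- (x + IZR 1 * PI)) with (- x + IZR (-1) * PI) by (simpl; ring).
  rewrite !pi_floor_add. lia.
Qed.

Lemma pi_level_odd_cases x m : pi_level x = (2 * m + 1)%Z ->
  exists k, pi_level x = (4 * k + 1)%Z /\ 0 < sin x \/
            pi_level x = (4 * k + 3)%Z /\ sin x < 0.
Proof.
  intros H. destruct (Z.Even_or_Odd m) as [[k Hk] | [k Hk]]; exists k; [left|right];
    split; try lia; [apply (sin_pi_level_1mod4 x k) | apply (sin_pi_level_3mod4 x k)]; lia.
Qed.

Lemma pi_level_same x y : Rabs (x - y) < PI ->
  (sin x = 0 /\ sin y = 0) \/ 0 < sin x * sin y -> pi_level x = pi_level y.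
Proof.
  intros Hd Hs. apply Rabs_def2 in Hd. pose proof PI_RGT_0.
  assert (Hxy : (pi_level x <= pi_level y + 2)%Z)
    by (rewrite <- pi_level_add_PI; apply pi_level_le; lra).
  assert (Hyx : (pi_level y <= pi_level x + 2)%Z)
    by (rewrite <- pi_level_add_PI; apply pi_level_le; lra).
  destruct (Z.Even_or_Odd (pi_level x)) as [[m Hm] | [m Hm]];
  destruct (Z.Even_or_Odd (pi_level y)) as [[m' Hm'] | [m' Hm']].
  - apply pi_level_even in Hm as Ex. apply pi_level_even in Hm' as Ey.
    rewrite Ex, Ey in Hd.
    assert (Hmm' : IZR m < IZR m' + 1) by (apply Rmult_lt_reg_r with PI; lra).
    assert (Hm'm : IZR m' < IZR m + 1) by (apply Rmult_lt_reg_r with PI; lra).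
    apply IZR_le_of_lt_succ in Hmm', Hm'm. lia.
  - apply sin_pi_level_even in Hm.
    destruct (pi_level_odd_cases y m' Hm') as [k [[_ Sy] | [_ Sy]]];
      rewrite Hm in Hs; destruct Hs; lra.
  - apply sin_pi_level_even in Hm'.
    destruct (pi_level_odd_cases x m Hm) as [k [[_ Sx] | [_ Sx]]];
      rewrite Hm' in Hs; destruct Hs; lra.
  - destruct (pi_level_odd_cases x m Hm) as [k [[Lx Sx] | [Lx Sx]]];
    destruct (pi_level_odd_cases y m' Hm') as [k' [[Ly Sy] | [Ly Sy]]];
      try lia; destruct Hs; nra.
Qed.

Lemma sin_sign_of_pos_multiples a u v D s1 s2 :
  0 < a -> 0 < u -> 0 < v -> D = u * s1 -> a * D = v * s2 ->
  (s1 = 0 /\ s2 = 0) \/ 0 < s1 * s2.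
Proof.
  intros Ha Hu Hv E1 E2.
  assert (E : s1 * s2 * (u * v) = a * D * D) by (rewrite E2, E1; ring).
  destruct (Req_dec D 0) as [Z|Z].
  - left. rewrite Z in E1, E2. split; nra.
  - right. assert (0 < D * D) by (apply Rsqr_pos_lt, Z).
    assert (0 < u * v) by nra. nra.
Qed.

(** * Walks driven by a level *)

Lemma nondecreasing_on (y : nat -> R) a b :
  (forall i, (a <= i < b)%nat -> y i <= y (S i)) ->
  forall i j, (a <= i <= j)%nat -> (j <= b)%nat -> y i <= y j.
Proof.
  intros H i j Hij Hjb. induction j as [|j IH].
  - replace i with 0%nat by lia. lra.
  - destruct (Nat.eq_dec i (S j)) as [->|Hne]; [lra|].
    specialize (IH ltac:(lia) ltac:(lia)). specialize (H j ltac:(lia)). lra.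
Qed.

Lemma nonincreasing_on (y : nat -> R) a b :
  (forall i, (a <= i < b)%nat -> y (S i) <= y i) ->
  forall i j, (a <= i <= j)%nat -> (j <= b)%nat -> y j <= y i.
Proof.
  intros H i j Hij Hjb.
  enough (- y i <= - y j) by lra.
  apply (nondecreasing_on (fun k => - y k) a b); auto.
  intros k Hk. specialize (H k Hk). lra.
Qed.

Lemma first_index_le (g : nat -> Z) (X : Z) j : (g j <= X)%Z ->
  exists k, (k <= j)%nat /\ (g k <= X)%Z /\ (k = 0%nat \/ (X < g (k - 1)%nat)%Z).
Proof.
  induction j as [|j IH]; intros H.
  - exists 0%nat. auto.
  - destruct (Z_le_gt_dec (g j) X) as [H1|H1].
    + destruct (IH H1) as [k [Hk [Hk2 Hk3]]]. exists k. auto.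
    + exists (S j). repeat split; auto. right. rewrite Nat.sub_1_r. simpl. lia.
Qed.

Record level_walk (n : nat) (l : nat -> Z) (y : nat -> R) : Prop := {
  walk_level_succ : forall e, (l (S e) <= l e)%Z;
  walk_level_period : forall e, l (e + n)%nat = (l e - 4)%Z;
  walk_period : forall e, y (e + n)%nat = y e;
  walk_flat : forall e m, l e = (2 * m)%Z -> y (S e) = y e;
  walk_up : forall e m, l e = (4 * m + 1)%Z -> y e < y (S e);
  walk_down : forall e m, l e = (4 * m + 3)%Z -> y (S e) < y e }.

Section LevelWalk.
Variables (n : nat) (l : nat -> Z) (y : nat -> R).
Hypothesis Hn : (1 <= n)%nat.
Hypothesis W : level_walk n l y.

Lemma walk_level_antitone a b : (a <= b)%nat -> (l b <= l a)%Z.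
Proof.
  induction 1 as [|b _ IH]; [lia|]. pose proof (walk_level_succ _ _ _ W b). lia.
Qed.

Lemma walk_period_mul e k : y (e + k * n)%nat = y e.
Proof.
  induction k as [|k IH]; [f_equal; lia|].
  replace (e + S k * n)%nat with (e + k * n + n)%nat by lia.
  rewrite (walk_period _ _ _ W). exact IH.
Qed.

Lemma walk_step_up e M : (4 * M - 4 <= l e <= 4 * M - 2)%Z -> y e <= y (S e).
Proof.
  intros H.
  assert (l e = 2 * (2 * M - 2) \/ l e = 4 * (M - 1) + 1 \/ l e = 2 * (2 * M - 1))%Z
    as [E|[E|E]] by lia.
  - rewrite (walk_flat _ _ _ W _ _ E). lra.
  - pose proof (walk_up _ _ _ W _ _ E). lra.
  - rewrite (walk_flat _ _ _ W _ _ E). lra.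
Qed.

Lemma walk_step_down e M : (4 * M - 2 <= l e <= 4 * M)%Z -> y (S e) <= y e.
Proof.
  intros H.
  assert (l e = 2 * (2 * M - 1) \/ l e = 4 * (M - 1) + 3 \/ l e = 2 * (2 * M))%Z
    as [E|[E|E]] by lia.
  - rewrite (walk_flat _ _ _ W _ _ E). lra.
  - pose proof (walk_down _ _ _ W _ _ E). lra.
  - rewrite (walk_flat _ _ _ W _ _ E). lra.
Qed.

Lemma walk_le_of_period_window e :
  (forall r, (r <= n)%nat -> y (e + r)%nat <= y e) -> forall i, y i <= y e.
Proof.
  intros H i. rewrite <- (walk_period_mul i e).
  set (d := (i + e * n - e)%nat).
  pose proof (Nat.div_mod_eq d n).
  replace (i + e * n)%nat with (e + d mod n + d / n * n)%nat by (unfold d in *; nia).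
  rewrite walk_period_mul. apply H.
  pose proof (Nat.mod_upper_bound d n). lia.
Qed.

(* Between e and e + n the level runs from 4m down to 4m - 4: the walk first
   goes down (levels in [4m - 2, 4m]), then up (levels in [4m - 4, 4m - 2]). *)
Lemma walk_max e m : l e = (4 * m)%Z -> forall i, y i <= y e.
Proof.
  intros He. apply walk_le_of_period_window. intros r Hr.
  destruct (Z_le_gt_dec (4 * m - 1) (l (e + r)%nat)) as [Hl|Hl].
  - apply (nonincreasing_on y e (e + r)); try lia.
    intros i Hi. apply (walk_step_down i m).
    pose proof (walk_level_antitone i (e + r)). pose proof (walk_level_antitone e i). lia.
  - rewrite <- (walk_period _ _ _ W e).
    apply (nondecreasing_on y (e + r) (e + n)); try lia.
    intros i Hi. apply (walk_step_up i m).
    pose proof (walk_level_antitone i (e + n)). pose proof (walk_level_antitone (e + r) i).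
    rewrite (walk_level_period _ _ _ W) in *. lia.
Qed.

Lemma walk_flat_step_level e : y (S e) = y e -> exists m, l e = (2 * m)%Z.
Proof.
  intros E. destruct (Z.Even_or_Odd (l e)) as [[m Hm] | [m Hm]]; [eauto|exfalso].
  destruct (Z.Even_or_Odd m) as [[k Hk] | [k Hk]].
  - pose proof (walk_up _ _ _ W e k ltac:(lia)). lra.
  - pose proof (walk_down _ _ _ W e k ltac:(lia)). lra.
Qed.

(* Starting from the first index K whose level is at most 4M + 2, a whole
   period has levels in [4M - 2, 4M + 2]: up while above 4M, down after. *)
Lemma walk_unimodal : exists K d, (d < n)%nat /\
  (forall i, (i < d)%nat -> y (K + i)%nat <= y (S (K + i))) /\
  (forall i, (d <= i < n)%nat -> y (S (K + i)) <= y (K + i)%nat).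
Proof.
  pose proof (walk_level_period _ _ _ W) as Hper.
  set (M := ((l 0%nat - 2) / 4)%Z).
  assert (HM : (4 * M + 2 <= l 0%nat < 4 * M + 6)%Z).
  { pose proof (Z.div_mod (l 0%nat - 2) 4). pose proof (Z.mod_pos_bound (l 0%nat - 2) 4).
    unfold M. lia. }
  destruct (first_index_le l (4 * M + 2) n) as [K [HKn [HK1 HK2]]].
  { rewrite <- (Nat.add_0_l n), Hper. lia. }
  assert (Hwin : forall i, (i < n)%nat -> (4 * M - 2 <= l (K + i)%nat <= 4 * M + 2)%Z).
  { intros i Hi. pose proof (walk_level_antitone K (K + i)).
    destruct HK2 as [-> | HK2].
    - pose proof (walk_level_antitone (0 + i) (0 + n)). rewrite Hper in *. lia.
    - pose proof (walk_level_antitone (K + i) (K - 1 + n)). rewrite Hper in *. lia. }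
  destruct (first_index_le (fun i => l (K + i)%nat) (4 * M) n) as [d [Hdn [Hd1 Hd2]]];
    cbv beta in *; [rewrite Hper; lia|].
  assert (Up : forall i, (i < d)%nat -> y (K + i)%nat <= y (S (K + i))).
  { intros i Hi. apply (walk_step_up _ (M + 1)).
    destruct Hd2 as [Hd2|Hd2]; [lia|].
    pose proof (walk_level_antitone (K + i) (K + (d - 1))). specialize (Hwin i ltac:(lia)). lia. }
  assert (Down : forall i, (d <= i < n)%nat -> y (S (K + i)) <= y (K + i)%nat).
  { intros i Hi. apply (walk_step_down _ M).
    pose proof (walk_level_antitone (K + d) (K + i)). specialize (Hwin i ltac:(lia)). lia. }
  destruct (Nat.eq_dec d n) as [-> | Hd]; [|exists K, d; split; [lia|auto]].
  (* a whole period of nondecreasing steps: the walk is constant *)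
  assert (Hup : forall i j, (K <= i <= j)%nat -> (j <= K + n)%nat -> y i <= y j).
  { apply nondecreasing_on. intros i Hi. replace i with (K + (i - K))%nat by lia. apply Up. lia. }
  exists K, 0%nat. split; [lia|]. split; [intros; lia|].
  intros i Hi. pose proof (walk_period _ _ _ W K).
  pose proof (Hup (S (K + i)) (K + n)%nat ltac:(lia) ltac:(lia)).
  pose proof (Hup K (K + i)%nat ltac:(lia) ltac:(lia)). lra.
Qed.

End LevelWalk.

Lemma level_walk_reflect n l y :
  level_walk n l y -> level_walk n (fun e => l e - 2)%Z (fun e => - y e).
Proof.
  intros [Hs Hl Hp Hf Hu Hd]. split; cbv beta.
  - intros e. specialize (Hs e). lia.
  - intros e. rewrite Hl. lia.
  - intros e. rewrite Hp. reflexivity.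
  - intros e m E. rewrite (Hf e (m + 1)%Z) by lia. reflexivity.
  - intros e m E. pose proof (Hd e m ltac:(lia)). lra.
  - intros e m E. pose proof (Hu e (m + 1)%Z ltac:(lia)). lra.
Qed.

Lemma walk_min n l y : (1 <= n)%nat -> level_walk n l y ->
  forall e m, l e = (4 * m + 2)%Z -> forall i, y e <= y i.
Proof.
  intros Hn W e m He i.
  enough (- y i <= - y e) by lra.
  apply (walk_max n _ _ Hn (level_walk_reflect n l y W) e m). lia.
Qed.

(** * Composites along a cyclic word *)

Lemma add_mod_self (k n : nat) : ((k + n) mod n = k mod n)%nat.
Proof. rewrite <- (Nat.mul_1_l n) at 1. apply Nat.Div0.mod_add. Qed.

Lemma cyclic_distance_add k d n : (k < n)%nat -> (d < n)%nat ->
  (((k + d) mod n + n - k) mod n = d)%nat.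
Proof.
  intros Hk Hd. destruct (Nat.lt_ge_cases (k + d) n) as [L|L].
  - rewrite (Nat.mod_small (k + d)) by exact L.
    replace (k + d + n - k)%nat with (d + n)%nat by lia.
    rewrite add_mod_self. apply Nat.mod_small, Hd.
  - replace (k + d)%nat with ((k + d - n) + n)%nat by lia.
    rewrite add_mod_self, (Nat.mod_small (k + d - n)) by lia.
    replace (k + d - n + n - k)%nat with d by lia. apply Nat.mod_small, Hd.
Qed.

Lemma lin_comp_assoc (f g h : lin) : lin_comp f (lin_comp g h) = lin_comp (lin_comp f g) h.
Proof. destruct f, g, h; unfold lin_comp; simpl; f_equal; ring. Qed.

Lemma lin_comp_id_r (f : lin) : lin_comp f (1, 0) = f.
Proof. destruct f; unfold lin_comp; simpl; f_equal; ring. Qed.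

Lemma lin_comp_id_l (f : lin) : lin_comp (1, 0) f = f.
Proof. destruct f; unfold lin_comp; simpl; f_equal; ring. Qed.

Fixpoint word_comp (g : nat -> lin) (k m : nat) : lin :=
  match m with
  | O => (1, 0)
  | S m' => lin_comp (g (k + m')%nat) (word_comp g k m')
  end.

Lemma word_comp_ext g g' k k' m :
  (forall i, (i < m)%nat -> g (k + i)%nat = g' (k' + i)%nat) ->
  word_comp g k m = word_comp g' k' m.
Proof.
  induction m as [|m IH]; intros H; simpl; auto.
  rewrite IH by (intros; apply H; lia). rewrite H by lia. reflexivity.
Qed.

Lemma word_comp_succ g k m : word_comp g k (S m) = lin_comp (word_comp g (S k) m) (g k).
Proof.
  induction m as [|m IH].
  - simpl. rewrite Nat.add_0_r, lin_comp_id_r, lin_comp_id_l. reflexivity.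
  - change (word_comp g k (S (S m))) with (lin_comp (g (k + S m)%nat) (word_comp g k (S m))).
    rewrite IH, lin_comp_assoc. simpl. do 3 f_equal. lia.
Qed.

Lemma comp_prefix_word_comp f s m :
  comp_prefix f s m = word_comp (fun i => f (s (S i))) 0 m.
Proof. induction m as [|m IH]; simpl; [reflexivity|]. rewrite IH. reflexivity. Qed.

(* The k-th letter of the cyclic word f_tau(1), ..., f_tau(n), 0-based, read mod n. *)
Definition cyc_letter (n : nat) (f : nat -> lin) (tau : nat -> nat) (k : nat) : lin :=
  f (tau (k mod n + 1)%nat).

Lemma shift_seq_word_comp n f tau k : (1 <= n)%nat ->
  shift_seq n f tau k = word_comp (cyc_letter n f tau) k n.
Proof.
  intros Hn. unfold shift_seq, composite. rewrite comp_prefix_word_comp.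
  assert (Hk : (k mod n < n)%nat) by (apply Nat.mod_upper_bound; lia).
  transitivity (word_comp (cyc_letter n f tau) (k mod n) n).
  - apply word_comp_ext. intros i Hi. unfold Defs.shift, cyc_letter.
    set (r := (k mod n)%nat) in *. rewrite Nat.add_0_l.
    destruct (Nat.leb_spec (S i) (n - r)) as [H|H].
    + rewrite (Nat.mod_small (r + i)) by lia. f_equal. f_equal. lia.
    + replace (r + i)%nat with ((r + i - n) + n)%nat by lia.
      rewrite add_mod_self, Nat.mod_small by lia. f_equal. f_equal. lia.
  - apply word_comp_ext. intros i Hi. unfold cyc_letter.
    rewrite Nat.Div0.add_mod_idemp_l. reflexivity.
Qed.

Lemma shift_seq_mod n f tau k k' : (k mod n = k' mod n)%nat ->
  shift_seq n f tau k = shift_seq n f tau k'.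
Proof. intros H. unfold shift_seq. rewrite H. reflexivity. Qed.

Lemma shift_seq_conj n f tau k : (1 <= n)%nat ->
  lin_comp (shift_seq n f tau (S k)) (cyc_letter n f tau k) =
  lin_comp (cyc_letter n f tau k) (shift_seq n f tau k).
Proof.
  intros Hn. rewrite !shift_seq_word_comp, <- word_comp_succ by exact Hn. simpl.
  unfold cyc_letter at 1. rewrite add_mod_self. reflexivity.
Qed.

Lemma composite_shift_seq0 n f tau : composite n f tau = shift_seq n f tau 0.
Proof.
  unfold shift_seq, composite. rewrite Nat.Div0.mod_0_l, !comp_prefix_word_comp.
  apply word_comp_ext. intros i Hi. unfold Defs.shift.
  destruct (Nat.leb_spec (S (0 + i)) (n - 0)); [|lia]. rewrite Nat.add_0_r. reflexivity.
Qed.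

Lemma strictly_unimodal_of_all_le {T : Type} (le : T -> T -> Prop) n (x : nat -> T) :
  (1 <= n)%nat -> (forall i j, le (x i) (x j)) -> strictly_unimodal le n x.
Proof.
  intros Hn H. split.
  - exists 0%nat, 0%nat. repeat split; intros; auto; lia.
  - intros j _ _. left. intros i _. apply H.
Qed.

(** * Offsets of the cyclic shifts *)

Section CyclicShifts.
Variables (n : nat) (f : nat -> lin) (tau : nat -> nat).
Hypothesis Hn : (1 <= n)%nat.
Hypothesis Hf : forall i, (1 <= i <= n)%nat -> monotone (f i) /\ ~ identical (f i).
Hypothesis Hperm : is_perm n tau.

Local Notation gen := (cyc_letter n f tau).
Local Notation comp := (shift_seq n f tau).

Lemma gen_monotone_not_identical k : 0 < fst (gen k) /\ ~ identical (gen k).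
Proof. apply Hf, (proj1 Hperm). pose proof (Nat.mod_upper_bound k n). lia. Qed.

Definition slope : R := fst (comp 0).
Definition offset (k : nat) : R := snd (comp k).

Lemma comp_slope k : fst (comp k) = slope.
Proof.
  induction k as [|k IH]; [reflexivity|].
  pose proof (f_equal fst (shift_seq_conj n f tau k Hn)) as E. simpl in E.
  destruct (gen_monotone_not_identical k) as [Ha _].
  apply (Rmult_eq_reg_r (fst (gen k))); [|lra]. rewrite E, IH. ring.
Qed.

Lemma offset_succ k :
  offset (S k) = fst (gen k) * offset k + (1 - slope) * snd (gen k).
Proof.
  pose proof (f_equal snd (shift_seq_conj n f tau k Hn)) as E. simpl in E.
  unfold offset. rewrite comp_slope in E. lra.
Qed.

Lemma comp_eq k : comp k = (slope, offset k).
Proof. rewrite <- (comp_slope k). unfold offset. destruct (comp k); reflexivity. Qed.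

Lemma offset_mod k k' : (k mod n = k' mod n)%nat -> offset k = offset k'.
Proof. intros H. unfold offset. rewrite (shift_seq_mod n f tau k k' H). reflexivity. Qed.

Lemma comp_le_of_offset_le i j : offset i <= offset j -> lin_le (comp i) (comp j).
Proof. intros H. rewrite !comp_eq. unfold lin_le, lin_eval. simpl. intros; lra. Qed.

Lemma offset_eq0 : slope = 1 -> offset 0 = 0 -> forall k, offset k = 0.
Proof.
  intros HA HB k. induction k as [|k IH]; [exact HB|].
  rewrite offset_succ, IH, HA. ring.
Qed.

Lemma offset_sign_slope1 : slope = 1 -> forall k,
  (0 < offset 0 -> 0 < offset k) /\ (offset 0 < 0 -> offset k < 0).
Proof.
  intros HA k. induction k as [|k IH]; [auto|].
  rewrite offset_succ, HA. destruct (gen_monotone_not_identical k) as [Ha _].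
  destruct IH as [I1 I2]. split; intros H; [specialize (I1 H)|specialize (I2 H)]; nra.
Qed.

Definition nondegenerate : Prop := ~ (slope = 1 /\ offset 0 = 0).

Lemma vec_comp_neq0 : nondegenerate ->
  forall k, ~ (fst (vec (comp k)) = 0 /\ snd (vec (comp k)) = 0).
Proof.
  intros Hnd k. rewrite comp_eq. simpl. intros [H1 H2].
  assert (HA : slope = 1) by lra. apply Hnd. split; [exact HA|].
  destruct (offset_sign_slope1 HA k) as [Pos Neg].
  destruct (Rtotal_order (offset 0) 0) as [L|[E|L]]; auto.
  - specialize (Neg L). lra.
  - specialize (Pos L). lra.
Qed.

Definition gen_angle (k : nat) : R := angle_of (vec (gen k)).
Definition comp_angle (k : nat) : R := angle_of (vec (comp k)).

Lemma gen_angle_spec k : polar_angle (vec (gen k)) (gen_angle k).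
Proof. apply angle_of_spec, vec_neq0, gen_monotone_not_identical. Qed.

Lemma theta_gen k : theta (gen k) = Some (gen_angle k).
Proof. apply theta_angle_of, vec_neq0, gen_monotone_not_identical. Qed.

Lemma gen_angle_mod k k' : (k mod n = k' mod n)%nat -> gen_angle k = gen_angle k'.
Proof. intros H. unfold gen_angle, cyc_letter. rewrite H. reflexivity. Qed.

Lemma comp_angle_mod k k' : (k mod n = k' mod n)%nat -> comp_angle k = comp_angle k'.
Proof. intros H. unfold comp_angle. rewrite (shift_seq_mod n f tau k k' H). reflexivity. Qed.

Section Nondegenerate.
Hypothesis Hnd : nondegenerate.

Lemma comp_angle_spec k : polar_angle (vec (comp k)) (comp_angle k).
Proof. apply angle_of_spec, vec_comp_neq0, Hnd. Qed.

Lemma theta_comp k : theta (comp k) = Some (comp_angle k).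
Proof. apply theta_angle_of, vec_comp_neq0, Hnd. Qed.

(* All vec (comp k) share the second coordinate 1 - slope: they lie in one open
   half-plane, or on one ray of the horizontal axis when the slope is 1. *)
Lemma comp_angle_succ_near k : Rabs (comp_angle (S k) - comp_angle k) < PI.
Proof.
  pose proof PI_RGT_0.
  pose proof (comp_angle_spec k) as P1. pose proof (comp_angle_spec (S k)) as P2.
  rewrite comp_eq in P1, P2. unfold vec in P1, P2; simpl in P1, P2.
  destruct (Rtotal_order slope 1) as [L|[E|L]].
  - apply polar_angle_upper in P1, P2; simpl; try lra. apply Rabs_def1; lra.
  - destruct (offset_sign_slope1 E k) as [S1 S2].
    destruct (offset_sign_slope1 E (S k)) as [S3 S4].
    apply polar_angle_axis in P1, P2; simpl in *; try lra.
    destruct P1 as [Q1 Q2], P2 as [Q3 Q4].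
    destruct (Rtotal_order (offset 0) 0) as [Lt|[Eq|Gt]].
    + rewrite (Q2 (S2 Lt)), (Q4 (S4 Lt)), Rminus_diag, Rabs_R0. exact H.
    + exfalso. apply Hnd. auto.
    + rewrite (Q1 (S1 Gt)), (Q3 (S3 Gt)), Rminus_diag, Rabs_R0. exact H.
  - apply polar_angle_lower in P1, P2; simpl; try lra. apply Rabs_def1; lra.
Qed.

(* The conjugation relation makes each offset step a cross product with vec (gen k). *)
Lemma offset_step_sin k : exists r, 0 < r /\
  offset (S k) - offset k = r * sin (comp_angle k - gen_angle k).
Proof.
  destruct (cross_polar_angle _ _ _ _ (gen_angle_spec k) (comp_angle_spec k)) as [r [Hr E]].
  exists r. split; [exact Hr|]. rewrite <- E, comp_eq, offset_succ. unfold vec; simpl. ring.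
Qed.

Lemma offset_step_sin_succ k : exists r, 0 < r /\
  fst (gen k) * (offset (S k) - offset k) = r * sin (comp_angle (S k) - gen_angle k).
Proof.
  destruct (cross_polar_angle _ _ _ _ (gen_angle_spec k) (comp_angle_spec (S k))) as [r [Hr E]].
  exists r. split; [exact Hr|]. rewrite <- E, comp_eq, offset_succ. unfold vec; simpl. ring.
Qed.

Lemma sin_step_same_sign k :
  (sin (comp_angle k - gen_angle k) = 0 /\ sin (comp_angle (S k) - gen_angle k) = 0) \/
  0 < sin (comp_angle k - gen_angle k) * sin (comp_angle (S k) - gen_angle k).
Proof.
  destruct (offset_step_sin k) as [r [Hr E1]].
  destruct (offset_step_sin_succ k) as [r' [Hr' E2]].
  exact (sin_sign_of_pos_multiples _ _ _ _ _ _
           (proj1 (gen_monotone_not_identical k)) Hr Hr' E1 E2).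
Qed.

End Nondegenerate.

Section Counterclockwise.
Variable p : nat.
Hypothesis Hp : (1 <= p <= n)%nat.
Hypothesis Hccw : forall i j, (1 <= i)%nat -> (i <= j)%nat -> (j <= n)%nat ->
  ~ identical (f (tau (rot n p i))) -> ~ identical (f (tau (rot n p j))) ->
  forall ti tj, theta (f (tau (rot n p i))) = Some ti ->
                theta (f (tau (rot n p j))) = Some tj -> ti <= tj.

(* 0-based index of the letter where the counterclockwise order starts *)
Definition start : nat := (p - 1)%nat.

Lemma gen_rot i : (1 <= i)%nat -> f (tau (rot n p i)) = gen (start + (i - 1)).
Proof. intros Hi. unfold cyc_letter, rot, start. do 4 f_equal. lia. Qed.

Lemma gen_angle_ccw r : (S r < n)%nat -> gen_angle (start + r) <= gen_angle (start + S r).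
Proof.
  intros Hr.
  pose proof (gen_rot (S r) ltac:(lia)) as E1. pose proof (gen_rot (S (S r)) ltac:(lia)) as E2.
  rewrite Nat.sub_1_r in E1, E2. simpl in E1, E2.
  apply (Hccw (S r) (S (S r))); try lia; rewrite ?E1, ?E2;
    apply gen_monotone_not_identical || apply theta_gen.
Qed.

(* The angles of the letters, read from start on and lifted to be nondecreasing. *)
Definition lift (e : nat) : R := gen_angle (start + e mod n) + 2 * INR (e / n) * PI.

Lemma lift_succ_ge e : lift e <= lift (S e).
Proof.
  unfold lift. pose proof PI_RGT_0. pose proof (Nat.div_mod_eq e n).
  pose proof (Nat.mod_upper_bound e n ltac:(lia)).
  destruct (Nat.lt_ge_cases (S (e mod n)) n) as [Hc|Hc].
  - rewrite <- (Nat.div_unique (S e) n (e / n) (S (e mod n))) by lia.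
    rewrite <- (Nat.mod_unique (S e) n (e / n) (S (e mod n))) by lia.
    pose proof (gen_angle_ccw _ Hc). lra.
  - rewrite <- (Nat.div_unique (S e) n (S (e / n)) 0) by lia.
    rewrite <- (Nat.mod_unique (S e) n (S (e / n)) 0) by lia.
    rewrite S_INR.
    destruct (proj1 (gen_angle_spec (start + e mod n))).
    destruct (proj1 (gen_angle_spec (start + 0))). lra.
Qed.

Lemma lift_period e : lift (e + n) = lift e + 2 * PI.
Proof.
  unfold lift. rewrite add_mod_self.
  replace (e + n)%nat with (e + 1 * n)%nat by lia. rewrite Nat.div_add by lia.
  rewrite plus_INR. simpl. ring.
Qed.

Lemma lift_eq e : lift e = gen_angle (start + e) + 2 * INR (e / n) * PI.
Proof. unfold lift. f_equal. apply gen_angle_mod, Nat.Div0.add_mod_idemp_r. Qed.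

Definition psi (e : nat) : R := comp_angle (start + e) - lift e.
Definition level (e : nat) : Z := pi_level (psi e).
Definition walk (e : nat) : R := offset (start + e).

Lemma sin_psi e : sin (psi e) = sin (comp_angle (start + e) - gen_angle (start + e)).
Proof.
  unfold psi. rewrite lift_eq.
  rewrite <- (sin_sub_2nPI (comp_angle (start + e) - gen_angle (start + e)) (e / n)).
  f_equal. ring.
Qed.

Lemma start_lt : (start < n)%nat.
Proof. unfold start. lia. Qed.

Lemma offset_eq_walk i : offset i = walk (i + n - start).
Proof.
  unfold walk. pose proof start_lt.
  apply offset_mod. replace (start + (i + n - start))%nat with (i + n)%nat by lia.
  symmetry. apply add_mod_self.
Qed.

Section Nondegenerate.
Hypothesis Hnd : nondegenerate.

(* psi (S e) and the angle psi' e := comp_angle (start + S e) - lift e are less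
   than PI apart with sines of the same sign, so they share a level; and
   psi (S e) <= psi' e since the lift is nondecreasing. *)
Lemma level_succ_le e : (level (S e) <= level e)%Z.
Proof.
  set (psi' := comp_angle (start + S e) - lift e).
  assert (E : pi_level psi' = level e).
  { unfold level. apply pi_level_same.
    - unfold psi', psi. replace (start + S e)%nat with (S (start + e)) by lia.
      replace (comp_angle (S (start + e)) - lift e - (comp_angle (start + e) - lift e))
        with (comp_angle (S (start + e)) - comp_angle (start + e)) by ring.
      apply comp_angle_succ_near, Hnd.
    - assert (Hs : sin psi' = sin (comp_angle (S (start + e)) - gen_angle (start + e))).
      { unfold psi'. rewrite lift_eq. replace (start + S e)%nat with (S (start + e)) by lia.
        rewrite <- (sin_sub_2nPI (comp_angle (S (start + e)) - gen_angle (start + e)) (e / n)).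
        f_equal. ring. }
      rewrite sin_psi, Hs.
      destruct (sin_step_same_sign Hnd (start + e)) as [Z|P]; [left|right]; lra. }
  rewrite <- E. apply pi_level_le. unfold psi, psi'. pose proof (lift_succ_ge e). lra.
Qed.

Lemma walk_step_sin e : exists r, 0 < r /\ walk (S e) - walk e = r * sin (psi e).
Proof.
  destruct (offset_step_sin Hnd (start + e)) as [r [Hr E]]. exists r.
  split; [exact Hr|]. rewrite sin_psi. unfold walk.
  replace (start + S e)%nat with (S (start + e)) by lia. exact E.
Qed.

Lemma level_walk_offsets : level_walk n level walk.
Proof.
  split.
  - exact level_succ_le.
  - intros e. unfold level. rewrite <- pi_level_sub_2PI. f_equal. unfold psi.
    rewrite lift_period, (comp_angle_mod (start + (e + n)) (start + e)); [ring|].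
    rewrite Nat.add_assoc. apply add_mod_self.
  - intros e. unfold walk. rewrite Nat.add_assoc. apply offset_mod, add_mod_self.
  - intros e m E. apply sin_pi_level_even in E.
    destruct (walk_step_sin e) as [r [_ D]]. rewrite E in D. lra.
  - intros e m E. apply sin_pi_level_1mod4 in E.
    destruct (walk_step_sin e) as [r [Hr D]]. nra.
  - intros e m E. apply sin_pi_level_3mod4 in E.
    destruct (walk_step_sin e) as [r [Hr D]]. nra.
Qed.

Lemma offset_flat_level j : offset (S j) = offset j ->
  exists m, level (j + n - start) = (4 * m)%Z \/ level (j + n - start) = (4 * m + 2)%Z.
Proof.
  intros E. rewrite !offset_eq_walk in E. pose proof start_lt.
  replace (S j + n - start)%nat with (S (j + n - start)) in E by lia.
  destruct (walk_flat_step_level _ _ _ Hn level_walk_offsets _ E) as [m Hm].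
  destruct (Z.Even_or_Odd m) as [[k Hk] | [k Hk]]; exists k; lia.
Qed.

Lemma is_max_of_level j m : level (j + n - start) = (4 * m)%Z -> is_max lin_le n comp (comp j).
Proof.
  intros E i _. apply comp_le_of_offset_le. rewrite !(offset_eq_walk).
  exact (walk_max n level walk Hn level_walk_offsets _ m E _).
Qed.

Lemma is_min_of_level j m : level (j + n - start) = (4 * m + 2)%Z -> is_min lin_le n comp (comp j).
Proof.
  intros E i _. apply comp_le_of_offset_le. rewrite !(offset_eq_walk).
  exact (walk_min n level walk Hn level_walk_offsets _ m E _).
Qed.

Lemma strictly_unimodal_nondegenerate : strictly_unimodal lin_le n comp.
Proof.
  pose proof start_lt. split.
  - destruct (walk_unimodal n level walk Hn level_walk_offsets) as [K [d [Hd [Up Down]]]].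
    set (k0 := ((start + K) mod n)%nat).
    assert (Hk0 : (k0 < n)%nat) by (apply Nat.mod_upper_bound; lia).
    assert (Hw : forall i, offset ((k0 + i) mod n) = walk (K + i)).
    { intros i. unfold walk. apply offset_mod. rewrite Nat.Div0.mod_mod.
      unfold k0. rewrite Nat.Div0.add_mod_idemp_l. f_equal. lia. }
    exists k0, ((k0 + d) mod n)%nat. split; [exact Hk0|].
    split; [apply Nat.mod_upper_bound; lia|]. cbv zeta.
    rewrite cyclic_distance_add by assumption.
    split; intros i Hi; apply comp_le_of_offset_le;
      rewrite <- Nat.add_assoc, !Hw, Nat.add_assoc, Nat.add_1_r; auto.
  - intros j Hj E.
    assert (Hflat : offset (S j) = offset j).
    { unfold offset. rewrite E, <- Nat.add_1_r. f_equal.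
      apply shift_seq_mod. symmetry. apply Nat.Div0.mod_mod. }
    destruct (offset_flat_level j Hflat) as [m [Em|Em]].
    + right. exact (is_max_of_level j m Em).
    + left. exact (is_min_of_level j m Em).
Qed.

Lemma psi_shifted j :
  psi (j + n - start) = comp_angle j - gen_angle j - 2 * INR ((j + n - start) / n) * PI.
Proof.
  pose proof start_lt. unfold psi. rewrite lift_eq.
  replace (start + (j + n - start))%nat with (j + n)%nat by lia.
  rewrite (comp_angle_mod (j + n) j), (gen_angle_mod (j + n) j) by apply add_mod_self. ring.
Qed.

(* At a flat step psi is 2m PI (maximum) or (2m + 1) PI (minimum), which pins
   the angle of f^{tau_k} relative to that of the letter f_tau(k+1). *)
Lemma flat_step_dichotomy k : (k < n)%nat -> comp k = comp (k + 1) ->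
  let A := is_min lin_le n comp (comp k) /\
           eq2pi_opt (add_pi (theta (f (tau (k + 1)%nat)))) (theta (comp k)) in
  let B := is_max lin_le n comp (comp k) /\
           eq2pi_opt (theta (f (tau (k + 1)%nat))) (theta (comp k)) in
  (A /\ ~ B) \/ (~ A /\ B).
Proof.
  intros Hk E. cbv zeta.
  assert (Hgen : f (tau (k + 1)%nat) = gen k)
    by (unfold cyc_letter; rewrite Nat.mod_small by exact Hk; reflexivity).
  assert (Hflat : offset (S k) = offset k)
    by (unfold offset; rewrite <- Nat.add_1_r, E; reflexivity).
  rewrite Hgen, theta_gen, (theta_comp Hnd). simpl.
  pose proof (psi_shifted k) as Hpsi.
  destruct (offset_flat_level k Hflat) as [m [Em|Em]];
    set (e := (k + n - start)%nat) in *;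
    assert (Hw : INR (e / n) = IZR (Z.of_nat (e / n))) by apply INR_IZR_INZ.
  - pose proof (pi_level_even (psi e) (2 * m) ltac:(unfold level in Em; lia)) as Ps.
    rewrite mult_IZR in Ps. right. split.
    + intros [_ [z Hz]]. apply (PI_neq_mult_2PI (z + m + Z.of_nat (e / n))).
      rewrite !plus_IZR, <- Hw. simpl in Ps. nra.
    + split; [exact (is_max_of_level k m Em)|].
      exists (- (m + Z.of_nat (e / n)))%Z. rewrite opp_IZR, plus_IZR, <- Hw. simpl in Ps. nra.
  - pose proof (pi_level_even (psi e) (2 * m + 1) ltac:(unfold level in Em; lia)) as Ps.
    rewrite plus_IZR, mult_IZR in Ps. left. split.
    + split; [exact (is_min_of_level k m Em)|].
      exists (- (m + Z.of_nat (e / n)))%Z. rewrite opp_IZR, plus_IZR, <- Hw. simpl in Ps. nra.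
    + intros [_ [z Hz]]. apply (PI_neq_mult_2PI (- (z + m + Z.of_nat (e / n)))).
      rewrite opp_IZR, !plus_IZR, <- Hw. simpl in Ps. nra.
Qed.

End Nondegenerate.

Lemma strictly_unimodal_shift_seq : strictly_unimodal lin_le n comp.
Proof.
  destruct (classic nondegenerate) as [Hnd | Hdeg].
  - exact (strictly_unimodal_nondegenerate Hnd).
  - apply NNPP in Hdeg as [HA HB]. apply strictly_unimodal_of_all_le; [exact Hn|].
    intros i j. apply comp_le_of_offset_le. rewrite !(offset_eq0 HA HB). lra.
Qed.

Lemma potentially_identical_of_degenerate : ~ nondegenerate -> potentially_identical n f.
Proof.
  intros Hdeg. apply NNPP in Hdeg as [HA HB].
  exists tau. split; [exact Hperm|]. split; [exists p; split; assumption|].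
  intros z. rewrite composite_shift_seq0, comp_eq, HA, HB. unfold lin_eval; simpl. ring.
Qed.

End Counterclockwise.
End CyclicShifts.


Theorem mainTheorem13 (n : nat) (f : nat -> lin) (tau : nat -> nat) :
  (1 <= n)%nat ->
  (forall i, (1 <= i <= n)%nat -> monotone (f i) /\ ~ identical (f i)) ->
  is_perm n tau ->
  counterclockwise n f tau ->
  strictly_unimodal lin_le n (shift_seq n f tau) /\
  (~ colinear n f -> ~ potentially_identical n f ->
   forall k, (k < n)%nat ->
     shift_seq n f tau k = shift_seq n f tau (k + 1) ->
     let A := is_min lin_le n (shift_seq n f tau) (shift_seq n f tau k) /\
              eq2pi_opt (add_pi (theta (f (tau (k + 1)%nat))))
                        (theta (shift_seq n f tau k)) in
     let B := is_max lin_le n (shift_seq n f tau) (shift_seq n f tau k) /\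
              eq2pi_opt (theta (f (tau (k + 1)%nat)))
                        (theta (shift_seq n f tau k)) in
     (A /\ ~ B) \/ (~ A /\ B)).
Proof.
  intros Hn Hf Hperm [p [Hp Hccw]].
  split; [exact (strictly_unimodal_shift_seq n f tau Hn Hf Hperm p Hp Hccw)|].
  intros _ Hnot_pi.
  assert (Hnd : nondegenerate n f tau).
  { intros Hdeg. apply Hnot_pi.
    apply (potentially_identical_of_degenerate n f tau Hn Hf Hperm p Hp Hccw).
    intros Hnd. exact (Hnd Hdeg). }
  exact (flat_step_dichotomy n f tau Hn Hf Hperm p Hp Hccw Hnd).
Qed.
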